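(* For every $m\ge1$, the ideal $I^{(k,r)}_m\subset V$ is stable under $\mathcal H_n^{(k,r)}$, i.e. it is a subrepresentation of $V$. (One has $I^{(k,r)}_1=I^{(k,r)}\subset I^{(k,r)}_2\subset\cdots\subset I^{(k,r)}_{m_0+1}=V$ with $m_0=[\frac n{k+1}]$.)
   Context: Let $\tilde{\mathbb K}=\mathbb C(t^{1/2},q)$. The double affine Hecke algebra $\mathcal H_n$ of type $GL_n$ is the $\tilde{\mathbb K}$-algebra generated by $X_i^{\pm1},Y_i^{\pm1}$ ($1\le i\le n$), $T_j$ ($1\le j\le n-1$) with relations: $X$'s commute, $Y$'s commute; $(T_i-t^{1/2})(T_i+t^{-1/2})=0$; braid relations for the $T_i$; $T_iX_iT_i=X_{i+1}$; $T_iX_j=X_jT_i$ ($j\ne i,i+1$); $T_i^{-1}Y_iT_i^{-1}=Y_{i+1}$; $T_iY_j=Y_jT_i$ ($j\ne i,i+1$); $Y_2^{-1}X_1Y_2X_1^{-1}=T_1^2$; $Y_i\tilde X=q\tilde XY_i$ ($\tilde X=\prod X_i$); $X_i\tilde Y=q^{-1}\tilde YX_i$ ($\tilde Y=\prod Y_i$). It acts on $U=\tilde{\mathbb K}[x_1^{\pm1},\dots,x_n^{\pm1}]$ by $X_i\mapsto x_i$, $T_i\mapsto t^{1/2}s_i+\frac{t^{1/2}-t^{-1/2}}{x_i/x_{i+1}-1}(s_i-1)$, $Y_i\mapsto T_i\cdots T_{n-1}\omega T_1^{-1}\cdots T_{i-1}^{-1}$, with $s_i$ swapping $x_i,x_{i+1}$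 and $(\omega f)(x)=f(qx_n,x_1,\dots,x_{n-1})$. Fix $1\le k\le n-1$, $r\ge2$, $g=\gcd(k+1,r-1)$, $\tau=e^{2\pi\sqrt{-1}/(r-1)}$, specialization $(\ast)$: $t=u^{(r-1)/g}$, $q=\tau u^{-(k+1)/g}$. $\mathbb K$, $\mathcal H_n^{(k,r)}$, $V=\mathbb K[x_1^{\pm1},\dots,x_n^{\pm1}]$ are the images under $(\ast)$ of the elements of $\tilde{\mathbb K}$, $\mathcal H_n$, $U$ regular at $(\ast)$. $Z^{(k,r)}_m$ is the set of $z\in\mathbb K^n$ for which there exist pairwise distinct indices $i_{l,a}$ ($1\le l\le m$, $1\le a\le k+1$) and $s_{l,a}\in\mathbb Z_{\ge0}$ ($1\le a\le k$) with $z_{i_{l,a+1}}=z_{i_{l,a}}tq^{s_{l,a}}$, $\sum_{a=1}^ks_{l,a}\le r-2$ for each $l$, and $i_{l,a}<i_{l,a+1}$ whenever $s_{l,a}=0$; $I^{(k,r)}_m=\{f\in V:f(z)=0\ \forall z\in Z^{(k,r)}_m\}$, and $I^{(k,r)}=I^{(k,r)}_1$. *)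

From HB Require Import structures.
From Stdlib Require Import Reals.
From mathcomp Require Import all_boot all_order all_algebra.
From mathcomp Require Import fraction complex Rstruct.
Set Implicit Arguments. Unset Strict Implicit. Unset Printing Implicit Defensive.
Import Order.TTheory GRing.Theory Num.Theory.
Local Open Scope ring_scope.

Definition Cx : fieldType := (Rdefinitions.R)[i].

Definition tau (r : nat) : Cx :=
  Complex (cos (2 * PI / INR (r.-1))%R) (sin (2 * PI / INR (r.-1))%R).

(* The field K = C(w) of rational functions in one variable w
   (K is exactly C(w) with w = u^{1/2} or w = u). *)
Definition KK : fieldType := {fraction {poly Cx}}.
Definition tofr (p : {poly Cx}) : KK := @FracField.tofrac _ p.
Definition w : KK := tofr 'X.

Definition gg (k r : nat) : nat := gcdn k.+1 r.-1.
Definition aa (k r : nat) : nat := (r.-1 %/ gg k r)%N.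
Definition bb (k r : nat) : nat := (k.+1 %/ gg k r)%N.
(* exponents so that t^{1/2} = w ^+ cexp and q = tau * w ^- dexp *)
Definition cexp (k r : nat) : nat := if odd (aa k r) then aa k r else (aa k r)./2.
Definition dexp (k r : nat) : nat := if odd (aa k r) then (bb k r).*2 else bb k r.

Definition t12 (k r : nat) : KK := w ^+ cexp k r.
Definition tpar (k r : nat) : KK := t12 k r ^+ 2.
Definition qpar (k r : nat) : KK := tofr (tau r)%:P * w ^- dexp k r.

(* Points: z : nat -> KK, only the coordinates z 0, ..., z (n-1) matter
   (0-based indexing: z i stands for z_{i+1} of the paper). *)
Definition Pt := nat -> KK.

Definition torus (n : nat) (z : Pt) : Prop := forall i, (i < n)%N -> z i != 0.

(* Elements of V = KK[x_1^{+-1},...,x_n^{+-1}], as functions on the torus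
   (KK is infinite, so a Laurent polynomial is determined by these values). *)
Definition laurent (n : nat) (f : Pt -> KK) : Prop :=
  exists s : seq ((nat -> int) * KK),
    forall z, torus n z ->
      f z = \sum_(p <- s) p.2 * \prod_(i < n) (z i) ^ (p.1 i).

(* z \in Z^{(k,r)}_m (0-based indices: l < m, a <= k) *)
Definition inZ (n k r m : nat) (z : Pt) : Prop :=
  exists (idx s : nat -> nat -> nat),
    [/\ forall l a, (l < m)%N -> (a <= k)%N -> (idx l a < n)%N,
        forall l a l' a', (l < m)%N -> (a <= k)%N -> (l' < m)%N -> (a' <= k)%N ->
          idx l a = idx l' a' -> l = l' /\ a = a',
        forall l a, (l < m)%N -> (a < k)%N ->
          z (idx l a.+1) = z (idx l a) * tpar k r * qpar k r ^+ s l a,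
        forall l, (l < m)%N -> (\sum_(a < k) s l a <= r - 2)%N
      & forall l a, (l < m)%N -> (a < k)%N -> s l a = 0%N ->
          (idx l a < idx l a.+1)%N].

Definition Iid (n k r m : nat) (f : Pt -> KK) : Prop :=
  laurent n f /\ forall z, torus n z -> inZ n k r m z -> f z = 0.

Definition Xop (i : nat) (f : Pt -> KK) : Pt -> KK := fun z => z i * f z.
Definition Xinv (i : nat) (f : Pt -> KK) : Pt -> KK := fun z => (z i)^-1 * f z.

Definition swapz (i : nat) (z : Pt) : Pt :=
  fun j => if j == i then z i.+1 else if j == i.+1 then z i else z j.

Definition omz (n k r : nat) (z : Pt) : Pt :=
  fun j => if j == 0%N then qpar k r * z n.-1 else z j.-1.
Definition Omega (n k r : nat) (f : Pt -> KK) : Pt -> KK := fun z => f (omz n k r z).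

(* Tspec i f g : "g = T_i f" (T_i the Demazure-Lusztig operator, swapping
   x_i, x_{i+1} in 0-based indexing); the defining formula is imposed where
   it makes sense, i.e. off the hyperplane z_i = z_{i+1}, which determines the
   Laurent polynomial g uniquely. *)
Definition Tspec (n k r i : nat) (f g : Pt -> KK) : Prop :=
  forall z, torus n z -> z i != z i.+1 ->
    g z = t12 k r * f (swapz i z)
          + (t12 k r - (t12 k r)^-1) / (z i / z i.+1 - 1) * (f (swapz i z) - f z).

(* Yspec i f g : "g = Y_i f" with (0-based)
   Y_i = T_i T_{i+1} ... T_{n-2} omega T_0^{-1} ... T_{i-1}^{-1}
   (the paper's Y_{i+1} = T_{i+1} ... T_{n-1} omega T_1^{-1} ... T_i^{-1}). *)
Definition Yspec (n k r i : nat) (f g : Pt -> KK) : Prop :=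
  exists h h' : nat -> Pt -> KK,
    [/\ h 0%N = f,
        forall j, (j <= i)%N -> laurent n (h j)
      & forall j, (j < i)%N -> Tspec n k r (i.-1 - j)%N (h j.+1) (h j)] /\
    [/\ h' 0%N = Omega n k r (h i),
        forall j, (j <= n.-1 - i)%N -> laurent n (h' j),
        forall j, (j < n.-1 - i)%N -> Tspec n k r (n.-2 - j)%N (h' j) (h' j.+1)
      & g = h' (n.-1 - i)%N].

From HB Require Import structures.
From Stdlib Require Import Reals Lra Lia.
From mathcomp Require Import all_boot all_order all_algebra.
From mathcomp Require Import fraction complex Rstruct.
From mathcomp Require Import zify ring.
Set Implicit Arguments. Unset Strict Implicit. Unset Printing Implicit Defensive.
Import Order.TTheory GRing.Theory Num.Theory.
Local Open Scope ring_scope.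

(* At a point of [Z_m] off the hyperplane [z_i = z_(i+1)], [T_i f] is a
   combination of [f z] and [f (s_i z)]; either [s_i z] is again in [Z_m], or
   [z] has the step [z_(i+1) = t z_i], where the coefficient of [f (s_i z)]
   vanishes.  Points of [Z_m] on the hyperplane are limits of such points:
   there [i] and [i+1] lie in different strings, and scaling the string
   through [i+1] by [w^(j+1)] leaves the hyperplane while staying in [Z_m], so
   a Laurent polynomial vanishing at all these points vanishes at [z].  The
   same argument applies to [T_i^-1].  The map [omega] sends [Z_m] into
   itself: strings are shifted by one index, and a string ending at [x_n] is
   rotated to the front, which is consistent because [t^(k+1) q^(r-1) = 1];
   as [omega^n] is multiplication by [q], [omega] maps [Z_m] onto itself.
   Hence [Y_i] preserves [I_m] as well.  The genericity of the specialization
   enters only through [t^d q^b <> 1] for [0 < d] and [b <= r - 2]. *)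
Lemma tofr_inj : injective tofr.
Proof. by move=> p q /eqP; rewrite tofrac_eq => /eqP. Qed.

Lemma w_neq0 : w != 0.
Proof. by rewrite /w /tofr tofrac_eq0 polyX_eq0. Qed.

Lemma wexp_neq0 j : w ^+ j != 0.
Proof. exact: expf_neq0 w_neq0. Qed.

(* [w] is transcendental over [Cx]. *)
Lemma wexpz_const_eq1 (e : int) (c : Cx) : w ^ e * tofr c%:P = 1 -> e = 0.
Proof.
case: e => [j|j] /= h; last first.
  have : tofr c%:P = tofr 'X^(j.+1).
    rewrite /tofr tofracXn -/w -[RHS]mulr1 -h mulrA.
    by rewrite [w ^ _]/= mulfV ?mul1r // wexp_neq0.
  move/tofr_inj/(congr1 (fun p : {poly Cx} => size p)).
  by rewrite size_polyC size_polyXn; case: (c != 0).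
have : tofr ('X^j * c%:P) = tofr 1.
  by rewrite /tofr tofracM tofracXn tofrac1.
move/tofr_inj/(congr1 (fun p : {poly Cx} => size p)); rewrite size_poly1 mulrC mul_polyC.
have [->|c0] := eqVneq c 0; first by rewrite scale0r size_poly0.
by rewrite size_scale // size_polyXn => -[->].
Qed.

Lemma wexp_inj : injective (fun j => w ^+ j).
Proof.
suff le_inj a b : (a <= b)%N -> w ^+ a = w ^+ b -> a = b.
  by move=> a b e; case: (leqP a b) => [/le_inj/(_ e)|/ltnW/le_inj/(_ (esym e))].
move=> ab e; have : w ^ (b - a)%N%:Z * tofr 1%:P = 1.
  rewrite /tofr tofrac1 mulr1; apply: (mulfI (wexp_neq0 a)).
  by rewrite mulr1 -exprnP -exprD subnKC.
by move/wexpz_const_eq1 => [] ?; lia.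
Qed.

Lemma wexpS_neq1 j : w ^+ j.+1 != 1.
Proof. by apply/eqP => /(@wexp_inj j.+1 0). Qed.

Section RootOfUnity.
Local Open Scope R_scope.

Definition theta (r : nat) := 2 * PI / INR r.-1.

Lemma tau_expr r b :
  GRing.exp (tau r) b = (cos (INR b * theta r) +i* sin (INR b * theta r))%C.
Proof.
elim: b => [|b IH].
  by rewrite GRing.expr0 /= Rmult_0_l cos_0 sin_0.
rewrite GRing.exprSr IH S_INR Rmult_plus_distr_r Rmult_1_l cos_plus sin_plus.
by rewrite /= RminusE !RmultE RplusE; congr (Complex _ _); rewrite addrC.
Qed.

Lemma tau_expr_pred r : (2 <= r)%N -> GRing.exp (tau r) r.-1 = GRing.one _.
Proof.
move=> hr; rewrite tau_expr /theta.
have r1 : INR r.-1 <> 0 by apply: not_0_INR; case: r hr => [|[|]].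
have -> : INR r.-1 * (2 * PI / INR r.-1) = 2 * PI.
  by rewrite /Rdiv Rmult_comm Rmult_assoc Rinv_l // Rmult_1_r.
by rewrite cos_2PI sin_2PI.
Qed.

(* [b theta] lies strictly between [0] and [2 pi], where only [pi] has zero
   sine, and [cos pi = -1]. *)
Lemma tau_expr_neq1 r b :
  (0 < b)%N -> (b < r.-1)%N -> GRing.exp (tau r) b != GRing.one _.
Proof.
move=> b0 br; rewrite tau_expr /theta; apply/negP => /eqP [hc hs].
have hb0 : 0 < INR b by apply/lt_0_INR/ssrnat.ltP.
have hbr : INR b < INR r.-1 by apply/lt_INR/ssrnat.ltP.
have pi0 := PI_RGT_0.
set x := INR b * (2 * PI / INR r.-1) in hc hs.
have x0 : 0 < x by rewrite /x; apply: Rmult_lt_0_compat => //; apply: Rdiv_lt_0_compat; lra.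
have x2 : x < 2 * PI.
  rewrite /x /Rdiv -Rmult_assoc (Rmult_comm (INR b)) Rmult_assoc.
  rewrite -[X in _ < X]Rmult_1_r; apply: Rmult_lt_compat_l; first lra.
  apply: (Rmult_lt_reg_r (INR r.-1)); first lra.
  rewrite Rmult_assoc Rinv_l; lra.
have [z xz] := sin_eq_0_0 _ hs; rewrite xz in x0 x2.
have z1 : z = Zpos xH.
  have : Z.lt Z0 z by apply: lt_IZR; nra.
  have : Z.lt z (Zpos (xO xH)) by apply: lt_IZR; nra.
  lia.
move: hc; rewrite xz z1 Rmult_1_l cos_PI => hc; change (-1 = 1) in hc; lra.
Qed.

End RootOfUnity.

Lemma aa_gt0 k r : (2 <= r)%N -> (0 < aa k r)%N.
Proof.
move=> hr; have hg : (0 < gg k r)%N by rewrite /gg gcdn_gt0.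
by rewrite /aa divn_gt0 // dvdn_leq ?dvdn_gcdr //; case: r hr {hg} => [|[|]].
Qed.

Lemma cexp_gt0 k r : (2 <= r)%N -> (0 < cexp k r)%N.
Proof.
move=> /(aa_gt0 k); rewrite /cexp; case: ifP => //.
by case: (aa k r) => [|[|a]] //= ; lia.
Qed.

Lemma cexp_dexp_balance k r : (2 * cexp k r * k.+1 = dexp k r * r.-1)%N.
Proof.
have key : (aa k r * k.+1 = bb k r * r.-1)%N.
  rewrite /aa /bb /gg; set g := gcdn k.+1 r.-1.
  have [gk gr] : (g %| k.+1 /\ g %| r.-1)%N by rewrite dvdn_gcdl dvdn_gcdr.
  rewrite -{1}(divnK gk) -{2}(divnK gr); ring.
have := odd_double_half (aa k r); rewrite /cexp /dexp; case: ifP => _; lia.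
Qed.

Lemma t12_neq0 k r : t12 k r != 0.
Proof. exact: wexp_neq0. Qed.

Lemma qpar_neq0 k r : (2 <= r)%N -> qpar k r != 0.
Proof.
move=> hr; rewrite /qpar mulf_neq0 ?invr_neq0 ?wexp_neq0 //.
rewrite /tofr tofrac_eq0 polyC_eq0; apply/eqP => tau0.
have := tau_expr_pred hr; rewrite tau0 expr0n.
by case: r hr {tau0} => [|[|]] // r _ /eqP; rewrite eq_sym oner_eq0.
Qed.

Lemma tpar_qpar_expr k r d b : tpar k r ^+ d * qpar k r ^+ b =
  w ^ ((2 * cexp k r * d)%N%:Z - (dexp k r * b)%N%:Z) * tofr (tau r ^+ b)%:P.
Proof.
rewrite expfzDr ?w_neq0 // -exprnN /tpar /t12 /qpar -!exprM exprMn exprVn -exprM.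
rewrite /tofr rmorphXn tofracXn /= -exprnP.
by rewrite (mulnCA (cexp k r)) mulnA mulrA mulrAC.
Qed.

Lemma tpar_qpar_neq1 k r d b : (2 <= r)%N -> (0 < d)%N -> (b <= r - 2)%N ->
  tpar k r ^+ d * qpar k r ^+ b != 1.
Proof.
move=> hr d0 hb; rewrite tpar_qpar_expr; apply/eqP => e1.
have e0 := wexpz_const_eq1 e1; move: e1.
rewrite e0 expr0z mul1r -tofrac1 => /tofr_inj /polyC_inj /eqP.
have c0 := cexp_gt0 k hr.
case: b hb e0 => [|b] hb e0; first by move: e0; rewrite muln0 subr0 => -[]; lia.
by apply/negP/tau_expr_neq1 => //; lia.
Qed.

Lemma tpar_neq1 k r : (2 <= r)%N -> tpar k r != 1.
Proof. by move=> hr; have := @tpar_qpar_neq1 k r 1 0 hr isT (leq0n _); rewrite mulr1. Qed.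

Lemma tpar_qpar_relation k r : (2 <= r)%N -> tpar k r ^+ k.+1 * qpar k r ^+ r.-1 = 1.
Proof.
move=> hr; rewrite tpar_qpar_expr cexp_dexp_balance subrr expr0z mul1r.
by rewrite tau_expr_pred // /tofr tofrac1.
Qed.

Lemma laurent_congr n f z z' : laurent n f -> torus n z -> torus n z' ->
  (forall j, (j < n)%N -> z j = z' j) -> f z = f z'.
Proof.
move=> [s hs] tz tz' zz'; rewrite (hs _ tz) (hs _ tz').
by apply: eq_bigr => p _; congr (_ * _); apply: eq_bigr => j _; rewrite zz'.
Qed.

Lemma prod_expz_shift n (z : Pt) (e : nat -> int) i c : (i < n)%N -> torus n z ->
  \prod_(j < n) z j ^ (e j + (if j == i :> nat then c else 0))
    = z i ^ c * \prod_(j < n) z j ^ e j.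
Proof.
move=> hi tz; under eq_bigr => j _ do rewrite expfzDr ?tz //.
rewrite big_split /= mulrC (bigD1 (Ordinal hi)) //= eqxx big1 ?mulr1 // => j ji.
by rewrite ifF ?expr0z //; apply: contraNF ji => /eqP ji; apply/eqP/val_inj.
Qed.

Lemma laurent_monomialM n f i c : (i < n)%N -> laurent n f ->
  laurent n (fun z => z i ^ c * f z).
Proof.
move=> hi [s hs].
exists [seq ((fun j => p.1 j + (if j == i then c else 0)), p.2) | p <- s] => z tz.
rewrite hs // big_map big_distrr; apply: eq_bigr => p _.
by rewrite /= prod_expz_shift // mulrCA.
Qed.

Lemma laurent_Xop n i f : (i < n)%N -> laurent n f -> laurent n (Xop i f).
Proof.
move=> hi /(laurent_monomialM 1 hi) [s hs]; exists s => z tz.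
by rewrite -hs // expr1z.
Qed.

Lemma laurent_Xinv n i f : (i < n)%N -> laurent n f -> laurent n (Xinv i f).
Proof.
move=> hi /(laurent_monomialM (-1) hi) [s hs]; exists s => z tz.
by rewrite -hs // exprN1.
Qed.

Definition scale_on (S : pred nat) (c : KK) (z : Pt) : Pt :=
  fun j => if S j then c * z j else z j.

Lemma torus_scale_on n S c z : c != 0 -> torus n z -> torus n (scale_on S c z).
Proof. by move=> c0 tz j hj; rewrite /scale_on; case: (S j); rewrite ?mulf_neq0 ?tz. Qed.

Lemma laurent_scale_on n g S z : laurent n g -> torus n z ->
  exists s : seq (int * KK), forall c, c != 0 ->
    g (scale_on S c z) = \sum_(p <- s) p.2 * c ^ p.1.
Proof.
move=> [s hs] tz.
exists [seq (\sum_(j < n | S j) p.1 j, p.2 * \prod_(j < n) z j ^ p.1 j)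
         | p : (nat -> int) * KK <- s].
move=> c c0; rewrite hs; last exact: torus_scale_on.
rewrite big_map; apply: eq_bigr => p _ /=.
rewrite -mulrA; congr (_ * _).
rewrite (big_morph (fun e => c ^ e) (fun a b => expfzDr a b c0) (expr0z c)).
rewrite [X in _ * X]big_mkcond -big_split /=; apply: eq_bigr => j _; rewrite /scale_on.
by case: (S j); rewrite ?mulr1 // expfzMl mulrC.
Qed.

(* Clearing denominators turns the sum into a polynomial with infinitely many
   roots [w ^+ j.+1]. *)
Lemma laurent1_eq0_at1 (s : seq (int * KK)) :
  (forall j, \sum_(p <- s) p.2 * (w ^+ j.+1) ^ p.1 = 0) -> \sum_(p <- s) p.2 = 0.
Proof.
move=> vanish; pose N : nat := \sum_(p <- s) `|p.1|%N.
have exp_ge0 p : p \in s -> 0 <= p.1 + N%:Z.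
  move=> ps; have : (`|p.1| <= N)%N by rewrite /N (big_rem p ps) leq_addr.
  lia.
pose P : {poly KK} := \sum_(p <- s) p.2%:P * 'X^(absz (p.1 + N%:Z)).
have hornerP x : x != 0 -> P.[x] = x ^+ N * \sum_(p <- s) p.2 * x ^ p.1.
  move=> x0; rewrite horner_sum big_distrr /= !big_seq; apply: eq_bigr => p ps.
  rewrite hornerE hornerXn exprnP gez0_abs ?exp_ge0 //.
  by rewrite expfzDr // -exprnP mulrA mulrC.
have P0 : P = 0.
  apply/eqP; apply: contraT => P0.
  have roots : all (root P) [seq w ^+ j.+1 | j <- iota 0 (size P)].
    by apply/allP => _ /mapP [j _ ->]; rewrite /root hornerP ?vanish ?mulr0 ?wexp_neq0.
  have uniq_roots : uniq [seq w ^+ j.+1 | j <- iota 0 (size P)].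
    by rewrite map_inj_uniq ?iota_uniq // => a b /wexp_inj [].
  by have := max_poly_roots P0 roots uniq_roots; rewrite size_map size_iota ltnn.
have := hornerP 1 (oner_neq0 _); rewrite P0 horner0 expr1n mul1r => at1.
rewrite [RHS]at1.
by apply: eq_bigr => p _; rewrite exp1rz mulr1.
Qed.

Lemma laurent_eq0_by_scaling n g S z : laurent n g -> torus n z ->
  (forall j, g (scale_on S (w ^+ j.+1) z) = 0) -> g z = 0.
Proof.
move=> hg tz vanish; have [s hs] := laurent_scale_on S hg tz.
have -> : g z = g (scale_on S 1 z).
  apply: laurent_congr hg tz (torus_scale_on _ (oner_neq0 _) tz) _ => j _.
  by rewrite /scale_on; case: (S j); rewrite ?mul1r.
rewrite hs ?oner_neq0 //; under eq_bigr => p _ do rewrite exp1rz mulr1.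
by apply: laurent1_eq0_at1 => j; rewrite -hs ?vanish ?wexp_neq0.
Qed.

(* One string of [Z]: [idx a] and [s a] are the paper's [i_(l,a+1)] and
   [s_(l,a+1)] for a fixed [l]. *)
Definition chain (n k r : nat) (z : Pt) (idx s : nat -> nat) : Prop :=
  [/\ forall a, (a <= k)%N -> (idx a < n)%N,
      forall a a', (a <= k)%N -> (a' <= k)%N -> idx a = idx a' -> a = a',
      forall a, (a < k)%N -> z (idx a.+1) = z (idx a) * tpar k r * qpar k r ^+ s a,
      (\sum_(a < k) s a <= r - 2)%N
    & forall a, (a < k)%N -> s a = 0%N -> (idx a < idx a.+1)%N].

Lemma inZP n k r m z : inZ n k r m z <->
  exists idx s : nat -> nat -> nat,
    (forall l, (l < m)%N -> chain n k r z (idx l) (s l)) /\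
    (forall l l' a a', (l < m)%N -> (l' < m)%N -> (a <= k)%N -> (a' <= k)%N ->
       idx l a = idx l' a' -> l = l').
Proof.
split=> [[idx [s [lt_n inj step sum_s ord]]]|[idx [s [ch disj]]]].
  exists idx, s; split=> [l hl|l l' a a' hl hl' ha ha' /inj []//].
  split=> [a|a a' ha ha' /inj []|a||a] //.
  - exact: lt_n.
  - exact: step.
  - exact: sum_s.
  - exact: ord.
exists idx, s; split=> [l a hl|l a l' a' hl ha hl' ha' e|l a hl|l hl|l a hl].
- by case: (ch l hl) => + _ _ _ _; apply.
- have ll' := disj _ _ _ _ hl hl' ha ha' e; subst l'.
  by case: (ch l hl) => _ + _ _ _ => /(_ a a' ha ha' e).
- by case: (ch l hl) => _ _ + _ _; apply.
- by case: (ch l hl).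
- by case: (ch l hl) => _ _ _ _; apply.
Qed.

Lemma inZ_map n k r m z z' (F : nat -> nat)
    (idxF sF : (nat -> nat) -> (nat -> nat) -> nat -> nat) :
  (forall j j', (j < n)%N -> (j' < n)%N -> F j = F j' -> j = j') ->
  (forall idx s, chain n k r z idx s ->
     chain n k r z' (idxF idx s) (sF idx s) /\
     forall a, (a <= k)%N -> exists2 b, (b <= k)%N & idxF idx s a = F (idx b)) ->
  inZ n k r m z -> inZ n k r m z'.
Proof.
move=> F_inj map_chain /inZP [idx [s [ch disj]]]; apply/inZP.
exists (fun l => idxF (idx l) (s l)), (fun l => sF (idx l) (s l)); split.
  by move=> l hl; case: (map_chain _ _ (ch l hl)).
have lt_n l b : (l < m)%N -> (b <= k)%N -> (idx l b < n)%N.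
  by move=> hl hb; case: (ch l hl) => + _ _ _ _; apply.
move=> l l' a a' hl hl' ha ha'.
have [_ /(_ a ha) [b hb ->]] := map_chain _ _ (ch l hl).
have [_ /(_ a' ha') [b' hb' ->]] := map_chain _ _ (ch l' hl').
by move/(F_inj _ _ (lt_n _ _ hl hb) (lt_n _ _ hl' hb')); apply: disj.
Qed.

Lemma inZS n k r m z : inZ n k r m.+1 z -> inZ n k r m z.
Proof.
move=> /inZP [idx [s [ch disj]]]; apply/inZP; exists idx, s.
by split=> [l /ltnW/ch|l l' a a' /ltnW hl /ltnW hl']; last exact: disj.
Qed.

(* The [m (k+1)] indices of the chains are distinct elements of [[0, n)]. *)
Lemma inZ_empty n k r z : ~ inZ n k r (n %/ k.+1).+1 z.
Proof.
move=> [idx [s [lt_n inj _ _ _]]]; set m := (n %/ k.+1).+1 in idx s lt_n inj *.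
pose F (p : 'I_m * 'I_k.+1) : 'I_n := Ordinal (lt_n p.1 p.2 (ltn_ord p.1) (ltn_ord p.2)).
have F_inj : injective F.
  move=> [l a] [l' a'] /(congr1 val) /= e.
  have [e1 e2] := inj _ _ _ _ (ltn_ord l) (ltn_ord a) (ltn_ord l') (ltn_ord a') e.
  by congr pair; apply: val_inj.
have := leq_card F F_inj; rewrite card_prod !card_ord.
by have := ltn_ceil n (ltn0Sn k); rewrite /m; lia.
Qed.

Lemma chain_expr n k r z idx s : chain n k r z idx s ->
  forall a d, (a + d <= k)%N ->
    z (idx (a + d)%N) = z (idx a) * tpar k r ^+ d * qpar k r ^+ (\sum_(a <= c < a + d) s c).
Proof.
move=> [_ _ step _ _] a; elim=> [|d IH] hd; first by rewrite addn0 big_geq // !mulr1.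
rewrite addnS step; last by lia.
by rewrite IH 1?big_nat_recr /= ?exprS ?exprD; [ring|lia|lia].
Qed.

Lemma chain_value_inj n k r z idx s a a' : (2 <= r)%N -> torus n z ->
  chain n k r z idx s -> (a <= k)%N -> (a' <= k)%N ->
  z (idx a) = z (idx a') -> a = a'.
Proof.
move=> hr tz ch.
wlog aa' : a a' / (a <= a')%N.
  move=> H ha ha' e; case: (leqP a a') => [aa'|/ltnW a'a]; first exact: H.
  exact/esym/(H a' a).
move=> ha ha' e; case: (ltngtP a a') aa' => // lt_aa' _.
have sum_le : (\sum_(a <= c < a') s c <= r - 2)%N.
  case: ch => _ _ _ + _; apply: leq_trans.
  rewrite -(big_mkord xpredT) (@big_cat_nat _ _ _ a 0 k) //.
  by rewrite (@big_cat_nat _ _ _ a' a k) ?(ltnW lt_aa') //=; lia.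
have z0 : z (idx a) != 0 by case: ch => + _ _ _ _ => /(_ a ha); apply: tz.
have := chain_expr ch (a := a) (d := a' - a); rewrite subnKC ?(ltnW lt_aa') // -e.
move=> /(_ ha').
rewrite -mulrA -{1}[z (idx a)]mulr1 => /(mulfI z0) /esym /eqP.
by rewrite (negbTE (tpar_qpar_neq1 _ hr _ sum_le)) // subn_gt0.
Qed.

Definition swapi (i j : nat) : nat := if j == i then i.+1 else if j == i.+1 then i else j.

Lemma swapz_swapi i z j : swapz i z (swapi i j) = z j.
Proof.
rewrite /swapz /swapi; case: (eqVneq j i) => [->|ji]; first by rewrite eqn_leq ltnn eqxx.
by case: (eqVneq j i.+1) => [->|ji1]; rewrite ?eqxx // (negbTE ji) (negbTE ji1).
Qed.

Lemma swapzK i z j : swapz i (swapz i z) j = z j.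
Proof.
rewrite /swapz; case: (eqVneq j i) => [->|ji]; first by rewrite eqn_leq ltnn eqxx.
by case: (eqVneq j i.+1) => [->|ji1]; rewrite ?eqxx.
Qed.

Lemma swapz_i i z : swapz i z i = z i.+1.
Proof. by rewrite /swapz eqxx. Qed.

Lemma swapz_iS i z : swapz i z i.+1 = z i.
Proof. by rewrite /swapz eqn_leq ltnn eqxx. Qed.

Lemma torus_swapz n i z : (i.+1 < n)%N -> torus n z -> torus n (swapz i z).
Proof.
move=> hi tz j hj; rewrite /swapz.
by case: ifP => _; [|case: ifP => _]; apply: tz; lia.
Qed.

Lemma swapi_lt n i j : (i.+1 < n)%N -> (j < n)%N -> (swapi i j < n)%N.
Proof. by rewrite /swapi; do ![case: eqP => ?] => /=; lia. Qed.

Lemma swapi_inj i : injective (swapi i).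
Proof. by move=> j j'; rewrite /swapi; do ![case: eqP => ?] => /=; lia. Qed.

Lemma swapi_ltn i j j' : (j < j')%N -> ~~ ((j == i) && (j' == i.+1)) ->
  (swapi i j < swapi i j')%N.
Proof. by rewrite /swapi; do ![case: eqP => ?] => /=; lia. Qed.

Lemma chain_swapz n k r i z idx s : (i.+1 < n)%N -> z i.+1 != z i * tpar k r ->
  chain n k r z idx s -> chain n k r (swapz i z) (swapi i \o idx) s.
Proof.
move=> hi zt [lt_n inj step sum_s ord]; split=> //.
- by move=> a ha; apply/swapi_lt/lt_n.
- by move=> a a' ha ha' /swapi_inj; apply: inj.
- by move=> a ha; rewrite /= !swapz_swapi; apply: step.
move=> a ha s0; apply: swapi_ltn; first exact: ord.
apply: contra zt => /andP [/eqP ia /eqP iaS].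
by rewrite -iaS -ia step // s0 mulr1.
Qed.

Lemma inZ_swapz n k r m i z : (i.+1 < n)%N -> inZ n k r m z ->
  inZ n k r m (swapz i z) \/ z i.+1 = z i * tpar k r.
Proof.
move=> hi hz; case: (eqVneq (z i.+1) (z i * tpar k r)) => [|zt]; first by right.
left; apply: (@inZ_map _ _ _ _ z _ (swapi i) (fun idx _ => swapi i \o idx) (fun _ s => s)) hz.
  by move=> j j' _ _ /swapi_inj.
by move=> idx s ch; split=> [|a ha]; [exact: chain_swapz | exists a].
Qed.

Lemma chain_scale_on n k r (S : pred nat) c z idx s :
  (forall a b, (a <= k)%N -> (b <= k)%N -> S (idx a) = S (idx b)) ->
  chain n k r z idx s -> chain n k r (scale_on S c z) idx s.
Proof.
move=> S_const [lt_n inj step sum_s ord]; split=> // a ha.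
rewrite /scale_on (S_const a.+1 a) ?(ltnW ha) // step //.
by case: (S (idx a)); rewrite -?mulrA.
Qed.

Lemma inZ_scale n k r m c z : inZ n k r m z -> inZ n k r m (scale_on predT c z).
Proof.
apply: (@inZ_map _ _ _ _ _ _ id (fun idx _ => idx) (fun _ s => s)) => // idx s ch.
by split=> [|a ha]; [exact: chain_scale_on | exists a].
Qed.

(* On the hyperplane [z_i = z_(i+1)] the indices [i] and [i+1] lie in
   different chains, so scaling the chain through [i+1] moves [z] off the
   hyperplane while staying in [Z]. *)
Lemma inZ_split_hyperplane n k r m i z : (2 <= r)%N -> torus n z -> inZ n k r m z ->
  z i = z i.+1 ->
  exists S : pred nat, [/\ ~~ S i, S i.+1 & forall c, inZ n k r m (scale_on S c z)].
Proof.
move=> hr tz /inZP [idx [s [ch disj]]] zii.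
pose through l := [exists a : 'I_k.+1, idx l a == i.+1].
pose S j := (j == i.+1) ||
  [exists l : 'I_m, through l && [exists b : 'I_k.+1, idx l b == j]].
have S_chain l a : (l < m)%N -> (a <= k)%N -> S (idx l a) = through l.
  move=> hl ha; apply/idP/idP.
    move=> /orP [/eqP e|/existsP [l' /andP [tl' /existsP [b /eqP e]]]].
    - by apply/existsP; exists (Ordinal (ha : (a < k.+1)%N)); rewrite e.
    - by rewrite -(disj _ _ _ _ (ltn_ord l') hl (ltn_ord b) ha e).
  move=> tl; apply/orP; right; apply/existsP; exists (Ordinal hl); rewrite tl /=.
  by apply/existsP; exists (Ordinal (ha : (a < k.+1)%N)).
exists S; split.
- apply/norP; split; first by rewrite neq_ltn ltnSn.
  apply/existsP => -[l /andP [/existsP [a /eqP ea] /existsP [b /eqP eb]]].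
  have lt_ord (j : 'I_k.+1) : (j <= k)%N by rewrite -ltnS.
  have := chain_value_inj hr tz (ch _ (ltn_ord l)) (lt_ord a) (lt_ord b).
  by rewrite ea eb zii => /(_ erefl) /val_inj ab; move: ea; rewrite ab eb => /n_Sn.
- by rewrite /S eqxx.
move=> c; apply/inZP; exists idx, s; split=> // l hl.
by apply: chain_scale_on (ch l hl) => a b ha hb; rewrite !S_chain.
Qed.

Definition shift (n j : nat) : nat := if j == n.-1 then 0%N else j.+1.

Lemma omz_shift n k r z j : (j < n)%N ->
  omz n k r z (shift n j) = if j == n.-1 then qpar k r * z j else z j.
Proof.
by move=> hj; rewrite /omz /shift; case: (eqVneq j n.-1) => [->|] /=; rewrite ?eqxx.
Qed.

Lemma shift_lt n j : (j < n)%N -> (shift n j < n)%N.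
Proof. by rewrite /shift; case: eqP; lia. Qed.

Lemma shift_inj n j j' : (j < n)%N -> (j' < n)%N -> shift n j = shift n j' -> j = j'.
Proof. by rewrite /shift; do 2 case: eqP; lia. Qed.

Lemma torus_omz n k r z : (2 <= r)%N -> (0 < n)%N -> torus n z -> torus n (omz n k r z).
Proof.
move=> hr hn tz j hj; rewrite /omz; case: (j == 0%N); last by apply: tz; lia.
by rewrite mulf_neq0 ?qpar_neq0 //; apply: tz; lia.
Qed.

Definition omz_idx n k (idx : nat -> nat) (a : nat) : nat :=
  if idx k == n.-1 then shift n (idx (if a == 0%N then k else a.-1))
  else shift n (idx a).

Definition omz_steps n k r (idx s : nat -> nat) (a : nat) : nat :=
  if idx k == n.-1 then (if a == 0%N then r - 2 - \sum_(c < k) s c else s a.-1)%N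
  else (s a + (idx a.+1 == n.-1) - (idx a == n.-1))%N.

(* A chain ending at [n-1] is rotated: [omega] brings its last point to the
   front as [q z_(n-1)], and [t^(k+1) q^(r-1) = 1] closes the cycle. *)
Lemma chain_omz_rotate n k r z idx s : (1 <= k)%N -> (2 <= r)%N ->
  idx k = n.-1 -> chain n k r z idx s ->
  chain n k r (omz n k r z)
    (fun a => shift n (idx (if a == 0%N then k else a.-1)))
    (fun a => if a == 0%N then (r - 2 - \sum_(c < k) s c)%N else s a.-1).
Proof.
case: k => // k _ hr last_n ch; have [lt_n inj step sum_s ord] := ch.
have not_last a : (a < k.+1)%N -> idx a != n.-1.
  by move=> ha; rewrite -last_n; apply/eqP => /inj; lia.
have shift_inner a : (a < k.+1)%N -> shift n (idx a) = (idx a).+1.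
  by move=> ha; rewrite /shift ifN // not_last.
have omz_inner a : (a < k.+1)%N -> omz n k.+1 r z (shift n (idx a)) = z (idx a).
  by move=> ha; rewrite omz_shift ?(negbTE (not_last _ ha)) // lt_n // ltnW.
have rot_le a : (a <= k.+1)%N -> ((if a == 0%N then k.+1 else a.-1) <= k.+1)%N.
  by case: eqP => // _; lia.
split.
- by move=> a ha; apply/shift_lt/lt_n/rot_le.
- move=> a a' ha ha'.
  move/(shift_inj (lt_n _ (rot_le _ ha)) (lt_n _ (rot_le _ ha'))).
  by move/(inj _ _ (rot_le _ ha) (rot_le _ ha')); do 2 case: eqP; lia.
- move=> [_|a ha] /=; last first.
    by have ha' := ltnW ha; rewrite !omz_inner // step.
  rewrite omz_inner // omz_shift ?lt_n // last_n eqxx.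
  have := chain_expr ch (a := 0) (d := k.+1); rewrite add0n last_n big_mkord => -> //.
  set S := \sum_(c < k.+1) s c.
  rewrite -[LHS]mulr1 -(tpar_qpar_relation k.+1 hr).
  have -> : r.-1 = (1 + S + (r - 2 - S))%N by move: sum_s; rewrite -/S; lia.
  rewrite !exprD exprS expr1; ring.
- rewrite big_ord_recl (eq_bigr (fun a : 'I_k => s a)) => [|a _]; last by rewrite /bump.
  by move: sum_s; rewrite big_ord_recr /=; lia.
- move=> [_ _|a ha /= /ord]; first by rewrite /= last_n {1}/shift eqxx shift_inner.
  by rewrite !shift_inner //; lia.
Qed.

(* A chain not ending at [n-1] is shifted by one; if it passes through [n-1],
   the extra factor [q] there is absorbed by the steps on either side. *)
Lemma chain_omz_shift n k r z idx s : (2 <= r)%N ->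
  idx k != n.-1 -> chain n k r z idx s ->
  chain n k r (omz n k r z) (fun a => shift n (idx a))
    (fun a => s a + (idx a.+1 == n.-1) - (idx a == n.-1))%N.
Proof.
move=> hr not_last [lt_n inj step sum_s ord].
have last_step a : (a < k)%N -> idx a = n.-1 -> (0 < s a)%N.
  move=> ha e; case: (posnP (s a)) => // /(ord _ ha).
  by have := lt_n _ ha; rewrite e; lia.
have last_once a : (a < k)%N -> idx a = n.-1 -> idx a.+1 != n.-1.
  by move=> ha <-; apply/eqP => /inj; lia.
split.
- by move=> a /lt_n /shift_lt.
- by move=> a a' ha ha' /(shift_inj (lt_n _ ha) (lt_n _ ha')) /inj; apply.
- move=> a ha; have [lt_a lt_aS] : (idx a < n /\ idx a.+1 < n)%N.
    by split; apply: lt_n; lia.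
  rewrite !omz_shift // step //.
  case: (eqVneq (idx a) n.-1) => [e|ne]; last first.
    by case: eqP => _; rewrite ?subn0 ?addn1 ?addn0 ?exprS; ring.
  rewrite (negbTE (last_once _ ha e)) /= addn0 subn1.
  by have := last_step _ ha e; case: (s a) => // b _; rewrite exprS; ring.
- pose D a := nat_of_bool (idx a == n.-1).
  have recr : (\sum_(a < k.+1) D a = \sum_(a < k) D a + D k)%N := big_ord_recr k D.
  have recl : (\sum_(a < k.+1) D a = D 0%N + \sum_(a < k) D a.+1)%N := big_ord_recl k D.
  have Dk : D k = 0%N by rewrite /D (negbTE not_last).
  have : (\sum_(a < k) (s a + D a.+1 - D a + D a) = \sum_(a < k) (s a + D a.+1))%N.
    apply: eq_bigr => a _; rewrite /D.
    by case: (eqVneq (idx a) n.-1) => [/(last_step _ (ltn_ord a))|] /=; lia.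
  move=> tele_sum.
  have -> : (\sum_(a < k) (s a + (idx a.+1 == n.-1) - (idx a == n.-1))
           = \sum_(a < k) (s a + D a.+1 - D a))%N by [].
  have shifted_le : (\sum_(a < k) D a.+1 <= \sum_(a < k) D a)%N.
    by rewrite -(leq_add2l (D 0%N)) -recl recr Dk addn0 leq_addl.
  move: tele_sum; rewrite !big_split /= => tele_sum.
  by rewrite -(leq_add2r (\sum_(a < k) D a)) tele_sum leq_add.
- move=> a ha; rewrite /shift; case: (eqVneq (idx a) n.-1) => [e|_] /=.
    by rewrite (negbTE (last_once _ ha e)).
  by case: eqP => _ /=; [lia | rewrite addn0 subn0 ltnS; apply: ord].
Qed.

Lemma inZ_omz n k r m z : (1 <= k)%N -> (2 <= r)%N -> (0 < n)%N ->
  inZ n k r m z -> inZ n k r m (omz n k r z).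
Proof.
move=> hk hr hn; apply: (@inZ_map _ _ _ _ _ _ (shift n) (fun idx _ => omz_idx n k idx)
  (omz_steps n k r)).
  exact: shift_inj.
move=> idx s ch; rewrite /omz_idx /omz_steps.
case: eqP => [last_n|/eqP not_last]; split.
- exact: chain_omz_rotate.
- by move=> a ha; exists (if a == 0%N then k else a.-1) => //; case: eqP => // _; lia.
- exact: chain_omz_shift.
- by move=> a ha; exists a.
Qed.

Lemma omz_iter n k r z p j : (p <= n)%N -> (j < n)%N ->
  iter p (omz n k r) z j =
    if (p <= j)%N then z (j - p)%N else qpar k r * z (n - p + j)%N.
Proof.
elim: p j => [|p IH] j hp hj /=; first by rewrite subn0.
rewrite {1}/omz; case: (eqVneq j 0%N) => [->|j0]; rewrite IH; try lia.
  have -> : (p <= n.-1)%N by lia.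
  by congr (_ * z _); lia.
case: (leqP p j.-1) => h1; case: (leqP p.+1 j) => h2; try lia.
  by congr (z _); lia.
by congr (_ * z _); lia.
Qed.

(* [omega^n] is multiplication by [q], so [z] is the image of
   [omega^(n-1) (q^-1 z)]. *)
Lemma inZ_omz_surj n k r m z : (1 <= k)%N -> (2 <= r)%N -> (0 < n)%N ->
  torus n z -> inZ n k r m z ->
  exists2 z', torus n z' /\ inZ n k r m z' &
    forall j, (j < n)%N -> omz n k r z' j = z j.
Proof.
move=> hk hr hn tz hz; have q0 := qpar_neq0 k hr.
pose z0 := scale_on predT (qpar k r)^-1 z.
have tz0 : torus n z0 by apply: torus_scale_on; rewrite ?invr_neq0.
have iter_torus p : torus n (iter p (omz n k r) z0).
  by elim: p => [|p IH]; [exact: tz0 | exact: torus_omz].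
have iter_inZ p : inZ n k r m (iter p (omz n k r) z0).
  by elim: p => [|p IH]; [exact: inZ_scale | exact: inZ_omz].
exists (iter n.-1 (omz n k r) z0); first exact: conj (iter_torus _) (iter_inZ _).
move=> j hj; rewrite -iterS prednK // omz_iter // leqNgt hj /= subnn add0n.
by rewrite /z0 /scale_on /= mulrA mulfV // mul1r.
Qed.

Lemma Iid_Xop n k r m i f : (i < n)%N -> Iid n k r m f -> Iid n k r m (Xop i f).
Proof.
by move=> hi [hf f0]; split=> [|z tz hz]; [exact: laurent_Xop | rewrite /Xop f0 ?mulr0].
Qed.

Lemma Iid_Xinv n k r m i f : (i < n)%N -> Iid n k r m f -> Iid n k r m (Xinv i f).
Proof.
by move=> hi [hf f0]; split=> [|z tz hz]; [exact: laurent_Xinv | rewrite /Xinv f0 ?mulr0].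
Qed.

Lemma vanish_off_hyperplane n k r m i g z : (2 <= r)%N -> (i.+1 < n)%N ->
  laurent n g -> torus n z -> inZ n k r m z ->
  (forall z', torus n z' -> inZ n k r m z' -> z' i != z' i.+1 -> g z' = 0) ->
  g z = 0.
Proof.
move=> hr hi hg tz hz g0; case: (eqVneq (z i) (z i.+1)) => [zii|]; last exact: g0.
have [S [Si SiS S_inZ]] := inZ_split_hyperplane hr tz hz zii.
apply: (laurent_eq0_by_scaling (S := S) hg tz) => j.
apply: g0; [exact/torus_scale_on/tz/wexp_neq0 | exact: S_inZ |].
have zi0 : z i != 0 by apply: tz; lia.
rewrite /scale_on (negbTE Si) SiS -zii -[X in X != _]mul1r.
by rewrite (inj_eq (mulIf zi0)) eq_sym wexpS_neq1.
Qed.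

Definition Tcoef k r i (z : Pt) : KK := (t12 k r - (t12 k r)^-1) / (z i / z i.+1 - 1).

Lemma Tspec_expr n k r i f g z : Tspec n k r i f g -> torus n z -> z i != z i.+1 ->
  g z = (t12 k r + Tcoef k r i z) * f (swapz i z) - Tcoef k r i z * f z.
Proof. by move=> hT tz zii; rewrite hT // /Tcoef; ring. Qed.

Lemma div_invf_sub1 (F : fieldType) (B x : F) : x != 0 -> x != 1 ->
  B / (x^-1 - 1) = - B - B / (x - 1).
Proof.
move=> x0 x1; have x10 : x - 1 != 0 by rewrite subr_eq0.
have -> : x^-1 - 1 = - (x - 1) / x by rewrite mulNr mulrBl mulfV // mul1r opprB.
by field; rewrite x10 x0 oppr_eq0.
Qed.

Lemma Tcoef_swapz n k r i z : (i.+1 < n)%N -> torus n z -> z i != z i.+1 ->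
  Tcoef k r i (swapz i z) = - (t12 k r - (t12 k r)^-1) - Tcoef k r i z.
Proof.
move=> hi tz zii; have [zi0 ziS0] : z i != 0 /\ z i.+1 != 0 by split; apply: tz; lia.
have x0 : z i / z i.+1 != 0 := mulf_neq0 zi0 (invr_neq0 ziS0).
have x1 : z i / z i.+1 != 1.
  by apply: contra zii => /eqP e; rewrite -[z i](divfK ziS0) e mul1r.
by rewrite /Tcoef swapz_i swapz_iS -[z i.+1 / z i]invf_div (div_invf_sub1 _ x0 x1).
Qed.

Lemma solve_swap_system (F : fieldType) (A c c' u v fu fv : F) : A != 0 ->
  c' = - (A - A^-1) - c ->
  fu = (A + c) * v - c * u -> fv = (A + c') * u - c' * v ->
  u = (A + c) * fv - (c + (A - A^-1)) * fu.
Proof. by move=> A0 -> -> ->; field. Qed.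

(* Solving the two equations [f = T_i g] at [z] and at [s_i z] for [g z]. *)
Lemma Tspec_inv_expr n k r i f g z : (i.+1 < n)%N -> laurent n g ->
  Tspec n k r i g f -> torus n z -> z i != z i.+1 ->
  g z = (t12 k r + Tcoef k r i z) * f (swapz i z)
        - (Tcoef k r i z + (t12 k r - (t12 k r)^-1)) * f z.
Proof.
move=> hi hg hT tz zii; have tz' := torus_swapz hi tz.
have zii' : swapz i z i != swapz i z i.+1 by rewrite swapz_i swapz_iS eq_sym.
have gssz : g (swapz i (swapz i z)) = g z.
  by apply: laurent_congr hg (torus_swapz hi tz') tz _ => j _; apply: swapzK.
apply: (solve_swap_system (t12_neq0 k r) (Tcoef_swapz k r hi tz zii)).
  exact: Tspec_expr hT tz zii.
by rewrite (Tspec_expr hT tz' zii') gssz.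
Qed.

Lemma add_div_invf_sub1_eq0 (F : fieldType) (A : F) : A != 0 -> A ^+ 2 != 1 ->
  A + (A - A^-1) / ((A ^+ 2)^-1 - 1) = 0.
Proof.
move=> A0 A21; have B0 : 1 - A ^+ 2 != 0 by rewrite subr_eq0 eq_sym.
have -> : (A ^+ 2)^-1 - 1 = (1 - A ^+ 2) / A ^+ 2 by field.
by field; rewrite A0 B0.
Qed.

(* With [t = A^2] one gets [Tcoef = (A - A^-1) / (A^-2 - 1) = -A]. *)
Lemma t12_add_Tcoef_eq0 k r i z : (2 <= r)%N -> z i != 0 -> z i.+1 = z i * tpar k r ->
  t12 k r + Tcoef k r i z = 0.
Proof.
move=> hr zi0 zt; rewrite /Tcoef zt invfM mulrA mulfV // mul1r.
by apply: add_div_invf_sub1_eq0; [exact: t12_neq0 | exact: tpar_neq1].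
Qed.

Lemma swap_combination_eq0 n k r m i f g z d : (2 <= r)%N -> (i.+1 < n)%N ->
  (forall z, torus n z -> inZ n k r m z -> f z = 0) ->
  torus n z -> inZ n k r m z ->
  g z = (t12 k r + Tcoef k r i z) * f (swapz i z) + d * f z -> g z = 0.
Proof.
move=> hr hi f0 tz hz ->; rewrite (f0 z) // mulr0 addr0.
case: (inZ_swapz hi hz) => [hz'|zt]; first by rewrite (f0 _ (torus_swapz hi tz) hz') mulr0.
by rewrite t12_add_Tcoef_eq0 ?mul0r //; apply: tz; lia.
Qed.

Lemma Iid_Tspec n k r m i f g : (2 <= r)%N -> (i.+1 < n)%N ->
  Iid n k r m f -> laurent n g -> Tspec n k r i f g -> Iid n k r m g.
Proof.
move=> hr hi [_ f0] hg hT; split=> // z tz hz.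
apply: (vanish_off_hyperplane hr hi hg tz hz) => {}z {}tz {}hz zii.
by apply: (swap_combination_eq0 (d := - Tcoef k r i z) hr hi f0 tz hz);
  rewrite (Tspec_expr hT tz zii) mulNr.
Qed.

Lemma Iid_Tspec_inv n k r m i f g : (2 <= r)%N -> (i.+1 < n)%N ->
  Iid n k r m f -> laurent n g -> Tspec n k r i g f -> Iid n k r m g.
Proof.
move=> hr hi [_ f0] hg hT; split=> // z tz hz.
apply: (vanish_off_hyperplane hr hi hg tz hz) => {}z {}tz {}hz zii.
apply: (swap_combination_eq0 (d := - (Tcoef k r i z + (t12 k r - (t12 k r)^-1)))
  hr hi f0 tz hz).
by rewrite (Tspec_inv_expr hi hg hT tz zii) mulNr.
Qed.

Lemma Iid_Omega n k r m f : (1 <= k)%N -> (2 <= r)%N -> (0 < n)%N ->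
  Iid n k r m f -> laurent n (Omega n k r f) -> Iid n k r m (Omega n k r f).
Proof.
move=> hk hr hn [_ f0] hl; split=> // z tz hz.
by apply: f0; [exact: torus_omz | exact: inZ_omz].
Qed.

Lemma Iid_Omega_inv n k r m h : (1 <= k)%N -> (2 <= r)%N -> (0 < n)%N ->
  laurent n h -> Iid n k r m (Omega n k r h) -> Iid n k r m h.
Proof.
move=> hk hr hn hl [_ h0]; split=> // z tz hz.
have [z' [tz' hz'] omz'] := inZ_omz_surj hk hr hn tz hz.
by rewrite -(laurent_congr hl (torus_omz k hr hn tz') tz omz'); apply: h0.
Qed.

Lemma bounded_ind (P : nat -> Prop) N : P 0%N ->
  (forall j, (j < N)%N -> P j -> P j.+1) -> forall j, (j <= N)%N -> P j.
Proof. by move=> P0 PS; elim=> // j IH jN; apply/PS/IH/ltnW. Qed.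

Lemma bounded_ind_down (P : nat -> Prop) N : P N ->
  (forall j, (j < N)%N -> P j.+1 -> P j) -> P 0%N.
Proof.
move=> PN PS; suff PNd d : (d <= N)%N -> P (N - d)%N by rewrite -(subnn N); apply: PNd.
elim: d => [|d IH] dN; first by rewrite subn0.
by apply: PS; [lia | rewrite -subSn // subSS; apply/IH/ltnW].
Qed.

Lemma Iid_Yspec n k r m i f g : (1 <= k)%N -> (k <= n.-1)%N -> (2 <= r)%N ->
  (i < n)%N -> Iid n k r m f -> Yspec n k r i f g -> Iid n k r m g.
Proof.
move=> hk hkn hr hi hf [h [h' [[h0 hl hT] [h'0 hl' hT' ->]]]].
have hn : (0 < n)%N by lia.
have hi_Iid : Iid n k r m (h i).
  apply: (bounded_ind (P := fun j => Iid n k r m (h j))) (leqnn i); first by rewrite h0.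
  by move=> j ji IH; apply: (Iid_Tspec_inv hr _ IH (hl _ ji) (hT _ ji)); lia.
apply: (bounded_ind (P := fun j => Iid n k r m (h' j))) (leqnn _).
  by rewrite h'0; apply: (Iid_Omega hk hr hn hi_Iid); rewrite -h'0; apply: hl'.
by move=> j jn IH; apply: (Iid_Tspec hr _ IH (hl' _ jn) (hT' _ jn)); lia.
Qed.

Lemma Iid_Yspec_inv n k r m i f g : (1 <= k)%N -> (k <= n.-1)%N -> (2 <= r)%N ->
  (i < n)%N -> Iid n k r m f -> laurent n g -> Yspec n k r i g f -> Iid n k r m g.
Proof.
move=> hk hkn hr hi hf hg [h [h' [[h0 hl hT] [h'0 hl' hT' hf']]]].
have hn : (0 < n)%N by lia.
have h'0_Iid : Iid n k r m (h' 0%N).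
  apply: (bounded_ind_down (P := fun j => Iid n k r m (h' j)) (N := n.-1 - i)).
    by rewrite -hf'.
  by move=> j jn IH; apply: (Iid_Tspec_inv hr _ IH (hl' _ (ltnW jn)) (hT' _ jn)); lia.
have hi_Iid : Iid n k r m (h i).
  by apply: (Iid_Omega_inv hk hr hn (hl _ (leqnn i))); rewrite -h'0.
rewrite -h0; apply: (bounded_ind_down (P := fun j => Iid n k r m (h j))) hi_Iid _.
by move=> j ji IH; apply: (Iid_Tspec hr _ IH (hl _ (ltnW ji)) (hT _ ji)); lia.
Qed.

Lemma Iid_succ n k r m f : Iid n k r m f -> Iid n k r m.+1 f.
Proof. by move=> [hf f0]; split=> // z tz /inZS; apply: f0. Qed.

Lemma Iid_full n k r f : laurent n f -> Iid n k r (n %/ k.+1).+1 f.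
Proof. by move=> hf; split=> // z _ /inZ_empty. Qed.

Theorem theorem6p1 (n k r : nat) :
  (1 <= k)%N -> (k <= n.-1)%N -> (2 <= r)%N ->
  (forall m : nat, (1 <= m)%N ->
     [/\ forall i f, (i < n)%N -> Iid n k r m f -> Iid n k r m (Xop i f),
         forall i f, (i < n)%N -> Iid n k r m f -> Iid n k r m (Xinv i f),
         forall i f g, (i.+1 < n)%N -> Iid n k r m f -> laurent n g ->
           Tspec n k r i f g -> Iid n k r m g
       & forall i f g, (i.+1 < n)%N -> Iid n k r m f -> laurent n g ->
           Tspec n k r i g f -> Iid n k r m g]
     /\
     [/\ forall i f g, (i < n)%N -> Iid n k r m f ->
           Yspec n k r i f g -> Iid n k r m g
       & forall i f g, (i < n)%N -> Iid n k r m f -> laurent n g ->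
           Yspec n k r i g f -> Iid n k r m g])
  /\ (forall m f, (1 <= m)%N -> Iid n k r m f -> Iid n k r m.+1 f)
  /\ (forall f, laurent n f -> Iid n k r (n %/ k.+1).+1 f).
Proof.
move=> hk hkn hr; split; last by split=> [m f _|]; [exact: Iid_succ | exact: Iid_full].
move=> m _; split; split=> i f.
- exact: Iid_Xop.
- exact: Iid_Xinv.
- by move=> g hi; apply: Iid_Tspec.
- by move=> g hi; apply: Iid_Tspec_inv.
- by move=> g; apply: Iid_Yspec.
- by move=> g; apply: Iid_Yspec_inv.
Qed.
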